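(* Let $G=(V,E)$ be a finite connected undirected graph with $V=\{1,\dots,n\}$, symmetric nonnegative adjacency matrix $W=W^T$ with every row having a positive entry, $D=\operatorname{diag}(d_1,\dots,d_n)$ with $d_i=\sum_j W_{ij}$, and $P=D^{-1}W$. Let $A=\operatorname{diag}(\alpha_1,\dots,\alpha_n)$ with $\alpha_i\in(0,1)$ for all $i$. For $i\in V$ let $$K_i(A)=\frac{1}{e_i^T[I-AP]^{-1}\underline{1}}.$$ Then for all $i,j\in V$, $$\frac{d_i}{\alpha_i K_i(A)}\,\pi_j(i)=\frac{d_j}{\alpha_j K_j(A)}\,\pi_i(j),$$ where $\pi_j(i)$ denotes the Occupation-time Personalized PageRank of node $j$ with restart distribution $e_i^T$.
   Context: $e_i$ is the $i$th standard basis column vector and $\underline{1}$ the all-ones column vector. For a probability vector $v$ on $V$, consider the Markov chain $(X_t)$ on $V$ with transition matrix $\tilde P=AP+(I-A)\underline{1}v^T$ (at node $i$, with probability $1-\alpha_i$ the walk restarts at a node drawn from $v$, otherwise it moves according to $P$). The Occupation-time Personalized PageRank is $\pi_j(v)=\lim_{t\to\infty}\mathbb P(X_t=j)$, the stationary distribution of $\tilde P$; and $\pi_j(i):=\pi_j(e_i^T)$. *)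

From HB Require Import structures.
From mathcomp Require Import all_boot all_order all_algebra.
Set Implicit Arguments. Unset Strict Implicit. Unset Printing Implicit Defensive.
Import Order.TTheory GRing.Theory Num.Theory.
Local Open Scope ring_scope.

Section PPR.
Variables (R : realFieldType) (n : nat).

Definition deg (W : 'M[R]_n) (i : 'I_n) : R := \sum_(j < n) W i j.

Definition transP (W : 'M[R]_n) : 'M[R]_n :=
  invmx (diag_mx (\row_i deg W i)) *m W.

Definition Amx (alpha : 'I_n -> R) : 'M[R]_n := diag_mx (\row_i alpha i).

Definition ebasis (i : 'I_n) : 'rV[R]_n := delta_mx 0 i.

Definition ones : 'cV[R]_n := const_mx 1.

Definition Kfun (W : 'M[R]_n) (alpha : 'I_n -> R) (i : 'I_n) : R :=
  1 / (ebasis i *m invmx (1%:M - Amx alpha *m transP W) *m ones) 0 0.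

Definition Ptilde (W : 'M[R]_n) (alpha : 'I_n -> R) (v : 'rV[R]_n) : 'M[R]_n :=
  Amx alpha *m transP W + (1%:M - Amx alpha) *m ones *m v.

Definition is_stationary (M : 'M[R]_n) (p : 'rV[R]_n) : Prop :=
  [/\ forall j, 0 <= p 0 j, \sum_(j < n) p 0 j = 1 & p *m M = p].

Definition connected_graph (W : 'M[R]_n) : Prop :=
  forall i j : 'I_n, connect [rel x y | 0 < W x y] i j.

End PPR.

Arguments deg {R n}.
Arguments transP {R n}.
Arguments Amx {R n}.
Arguments ebasis {R n}.
Arguments ones {R n}.
Arguments Kfun {R n}.
Arguments Ptilde {R n}.
Arguments is_stationary {R n}.
Arguments connected_graph {R n}.

(** The restart step of the walk started at [i] only re-injects mass at [i],
    so stationarity reads [pi(i) (I - AP) = c e_i^T]; summing the entries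
    identifies [c] with [K_i(A)], whence [pi_j(i) = K_i(A) [(I - AP)^-1]_ij].
    With [D_A = diag(d_k / alpha_k)] one has [D_A (I - AP) = D_A - W], a
    symmetric matrix, so [D_A (I - AP)^-1 = D_A (D_A - W)^-1 D_A] is symmetric;
    its [(i, j)] entry is the left-hand side of the identity.  [I - AP] is
    invertible because [AP] is nonnegative with row sums [alpha_k < 1]. *)

From HB Require Import structures.
From mathcomp Require Import all_boot all_order all_algebra.
From mathcomp Require Import ring lra.
Set Implicit Arguments. Unset Strict Implicit. Unset Printing Implicit Defensive.
Import Order.TTheory GRing.Theory Num.Theory.
Local Open Scope ring_scope.

Lemma unitmx_of_ker0 (F : fieldType) (n : nat) (B : 'M[F]_n) :
  (forall x : 'cV_n, B *m x = 0 -> x = 0) -> B \in unitmx.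
Proof.
move=> ker0; rewrite -unitmx_tr -row_free_unit -kermx_eq0.
apply/eqP/row_matrixP => k; rewrite row0; apply: trmx_inj; rewrite trmx0.
apply: ker0; apply: trmx_inj.
by rewrite trmx_mul trmxK trmx0 -row_mul mulmx_ker row0.
Qed.

(* Maximum principle: an entry of largest modulus of a fixed point [x = M x]
   is at most [(\sum_j M m j) |x_m|], hence vanishes. *)
Lemma unitmx_1_sub_substochastic (R : realFieldType) (n : nat) (M : 'M[R]_n) :
  (forall i j, 0 <= M i j) -> (forall i, \sum_j M i j < 1) ->
  1%:M - M \in unitmx.
Proof.
move=> M_ge0 rowsum_lt1; apply: unitmx_of_ker0 => x.
rewrite mulmxBl mul1mx => /eqP; rewrite subr_eq0 => /eqP x_fix.
apply/matrixP => k l; rewrite mxE (ord1 l).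
have [m _ x_max] := arg_maxP (fun j => `|x j 0|) (isT : predT k).
have x_m_le : `|x m 0| <= (\sum_j M m j) * `|x m 0|.
  rewrite {1}x_fix mxE mulr_suml; apply: le_trans (ler_norm_sum _ _ _) _.
  apply: ler_sum => j _; rewrite normrM ger0_norm //.
  exact: ler_wpM2l (x_max j isT).
have x_m0 : `|x m 0| <= 0.
  have := rowsum_lt1 m; have := normr_ge0 (x m 0); nra.
by apply/eqP; rewrite -normr_le0; apply: le_trans (x_max k isT) x_m0.
Qed.

Lemma unitmx_diag (F : fieldType) (n : nat) (d : 'rV[F]_n) :
  (forall k, d 0 k != 0) -> diag_mx d \in unitmx.
Proof. by move=> d_neq0; rewrite unitmxE det_diag unitfE; apply/prodf_neq0. Qed.

Lemma trmx_mul_invmx_sym (R : comUnitRingType) (n : nat) (D S : 'M[R]_n) :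
  D^T = D -> S^T = S -> (D *m invmx S *m D)^T = D *m invmx S *m D.
Proof. by move=> DT ST; rewrite !trmx_mul trmx_inv DT ST mulmxA. Qed.

Section RestartedWalk.
Variables (R : realFieldType) (n : nat) (W : 'M[R]_n) (alpha : 'I_n -> R).
Hypothesis W_ge0 : forall i j, 0 <= W i j.
Hypothesis W_row : forall i, exists j, 0 < W i j.
Hypothesis alpha_in01 : forall i, 0 < alpha i < 1.

Local Notation B := (1%:M - Amx alpha *m transP W).
Local Notation DA := (diag_mx (\row_k (deg W k / alpha k))).

Lemma deg_gt0 k : 0 < deg W k.
Proof.
have [j Wkj] := W_row k; rewrite /deg (bigD1 j) //=.
by rewrite ltr_wpDr // sumr_ge0.
Qed.

Lemma alpha_neq0 k : alpha k != 0.
Proof. by case/andP: (alpha_in01 k) => /gt_eqF->. Qed.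

Lemma mul_diag_deg_transP : diag_mx (\row_k deg W k) *m transP W = W.
Proof.
rewrite /transP mulmxA mulmxV ?mul1mx //.
by apply: unitmx_diag => k; rewrite mxE gt_eqF ?deg_gt0.
Qed.

Lemma AtransPE k j :
  (Amx alpha *m transP W) k j = alpha k / deg W k * W k j.
Proof.
move/matrixP: mul_diag_deg_transP => /(_ k j).
rewrite mul_diag_mx mxE => <-; rewrite /Amx mul_diag_mx !mxE.
by rewrite mulrA divfK // gt_eqF // deg_gt0.
Qed.

Lemma unitmx_1_sub_AP : B \in unitmx.
Proof.
apply: unitmx_1_sub_substochastic => [k j|k].
  rewrite AtransPE mulr_ge0 // divr_ge0 ?(ltW (deg_gt0 k)) //.
  by case/andP: (alpha_in01 k) => /ltW.
under eq_bigr do rewrite AtransPE.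
rewrite -mulr_sumr -/(deg W k) divfK ?gt_eqF ?deg_gt0 //.
by case/andP: (alpha_in01 k).
Qed.

Lemma mul_DA_1_sub_AP : DA *m B = DA - W.
Proof.
rewrite mulmxBr mulmx1; congr (_ - _); apply/matrixP => k j.
rewrite mul_diag_mx mxE AtransPE mxE; field.
by rewrite alpha_neq0 gt_eqF ?deg_gt0.
Qed.

Lemma scaled_resolvent_sym :
  W^T = W -> forall k l,
  deg W k / alpha k * invmx B k l = deg W l / alpha l * invmx B l k.
Proof.
move=> W_sym k l.
suff /matrixP/(_ l k) : (DA *m invmx B)^T = DA *m invmx B.
  rewrite [_^T _ _]mxE !(mul_diag_mx _ (invmx _)).
  by rewrite !mxE.
have unitDA : DA \in unitmx.
  apply: unitmx_diag => m.
  by rewrite mxE mulf_neq0 ?invr_eq0 ?alpha_neq0 // gt_eqF ?deg_gt0.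
have unitS : DA - W \in unitmx.
  by rewrite -mul_DA_1_sub_AP unitmx_mul unitDA unitmx_1_sub_AP.
have -> : invmx B = invmx (DA - W) *m DA.
  have inv_B : invmx (DA - W) *m DA *m B = 1%:M.
    by rewrite -mulmxA mul_DA_1_sub_AP mulVmx.
  rewrite -[RHS]mulmx1 -[X in _ = _ *m X](mulmxV unitmx_1_sub_AP).
  by rewrite [RHS]mulmxA inv_B mul1mx.
rewrite mulmxA trmx_mul_invmx_sym ?tr_diag_mx //.
by rewrite linearB /= W_sym tr_diag_mx.
Qed.

Lemma stationary_Ptilde_ebasis i (p : 'rV[R]_n) :
  is_stationary (Ptilde W alpha (ebasis i)) p ->
  Kfun W alpha i != 0 /\ p = Kfun W alpha i *: row i (invmx B).
Proof.
case=> _ p_sum p_fix; set c := (p *m (1%:M - Amx alpha) *m ones) 0 0.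
have pB : p *m B = c *: row i 1%:M.
  rewrite mulmxBr mulmx1 -{1}p_fix /Ptilde mulmxDr addrAC subrr add0r.
  by rewrite !mulmxA [_ *m ones]mx11_scalar mul_scalar_mx rowE mulmx1.
have pE : p = c *: row i (invmx B).
  by rewrite -(mulmxK unitmx_1_sub_AP p) pB -scalemxAl -row_mul mul1mx.
have c_sum : c * (ebasis i *m invmx B *m ones) 0 0 = 1.
  rewrite -[RHS]p_sum pE /ebasis -rowE mxE mulr_sumr.
  by apply: eq_bigr => l _; rewrite !mxE mulr1.
have /andP[c_neq0 t_neq0] : (c != 0) && ((ebasis i *m invmx B *m ones) 0 0 != 0).
  by rewrite -negb_or -mulf_eq0 c_sum oner_neq0.
have KE : Kfun W alpha i = c by rewrite /Kfun -[X in X / _]c_sum mulfK.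
by rewrite KE.
Qed.

End RestartedWalk.

Theorem theorem2 (R : realFieldType) (n : nat) (W : 'M[R]_n) (alpha : 'I_n -> R)
  (HWsym : W^T = W)
  (HWnn : forall i j, 0 <= W i j)
  (HWrow : forall i, exists j, 0 < W i j)
  (Hconn : connected_graph W)
  (Halpha : forall i, 0 < alpha i < 1)
  (pi : 'I_n -> 'rV[R]_n)
  (Hpi : forall i, is_stationary (Ptilde W alpha (ebasis i)) (pi i)) :
  forall i j : 'I_n,
    deg W i / (alpha i * Kfun W alpha i) * pi i 0 j
    = deg W j / (alpha j * Kfun W alpha j) * pi j 0 i.
Proof.
have entryE k l : deg W k / (alpha k * Kfun W alpha k) * pi k 0 l
                  = deg W k / alpha k * invmx (1%:M - Amx alpha *m transP W) k l.
  have [K_neq0 ->] := stationary_Ptilde_ebasis HWnn HWrow Halpha (Hpi k).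
  rewrite !mxE; field.
  by rewrite K_neq0 (alpha_neq0 Halpha).
move=> i j; rewrite !entryE.
exact: scaled_resolvent_sym.
Qed.
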